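(* Let $a>0$, $b>0$, $q\in(0,1)$, and let $\alpha,\beta,t$ be real numbers with $\alpha+\beta t>1$. Then \[ a\gamma - b\ln(1-q) + a\psi(\alpha+\beta t) - b\psi_q(\alpha+\beta t) > 0 . \]
   Context: $\gamma$ denotes the Euler–Mascheroni constant and $\psi(t)=\Gamma'(t)/\Gamma(t)$ is the digamma function for $t>0$, where $\Gamma$ is Euler's Gamma function. For $q\in(0,1)$ and $t>0$, the $q$-Gamma function is $\Gamma_q(t)=(1-q)^{1-t}\prod_{n=1}^{\infty}\frac{1-q^n}{1-q^{t+n}}$, and $\psi_q(t)=\frac{d}{dt}\ln\Gamma_q(t)=\Gamma_q'(t)/\Gamma_q(t)$. *)

From Stdlib Require Import Reals.
From Coquelicot Require Import Coquelicot.
Open Scope R_scope.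

Definition euler_gamma : R :=
  real (Lim_seq (fun n => sum_f_R0 (fun k => / INR (S k)) n - ln (INR (S n)))).

Definition Gamma (t : R) : R :=
  RInt_gen (fun x => Rpower x (t - 1) * exp (- x)) (at_right 0) (Rbar_locally p_infty).

Definition digamma (t : R) : R := Derive (fun s => ln (Gamma s)) t.

Fixpoint qGamma_partial (q t : R) (N : nat) : R :=
  match N with
  | O => 1
  | S M => qGamma_partial q t M *
           ((1 - q ^ (S M)) / (1 - Rpower q (t + INR (S M))))
  end.

Definition qGamma (q t : R) : R :=
  Rpower (1 - q) (1 - t) * real (Lim_seq (qGamma_partial q t)).

Definition qdigamma (q t : R) : R := Derive (fun s => ln (qGamma q s)) t.

From Stdlib Require Import Reals Lra Lia.
From Coquelicot Require Import Coquelicot.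
Open Scope R_scope.

(* [digamma] and [qdigamma] are Coquelicot derivatives, i.e. [real] of the limit of the difference
   quotients at [x + 1 / (n + 1)]; bounds on these quotients therefore bound them, with no
   differentiability to prove.

   Gamma side: [Gamma] is the limit of the increasing truncated integrals, which gives
   [Gamma (s + 1) = s Gamma s] and, by convexity of [exp], log-convexity of [Gamma].  Comparing
   slopes of [ln Gamma] on [x + N, x + N + 1, x + N + 1 + h] and unrolling the recurrence gives
   [psi x >= ln (x + N) - sum_(k <= N) 1 / (x + k) >= ln (N + 1) - H_(N + 1) + 1 - 1 / x],
   so [gamma + psi x >= 1 - 1 / x > 0] for [x > 1].

   q side: [ln Gamma_q s = (1 - s) ln (1 - q) + ln P s], where every factor of the product [P]
   decreases in [s]; the first factor decreases at a rate bounded below uniformly in [h], so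
   [psi_q x < - ln (1 - q)]. *)

Lemma exp_le_exp_compat x y : x <= y -> exp x <= exp y.
Proof.
  intros Hxy; destruct (Rle_lt_or_eq_dec _ _ Hxy) as [Hlt | ->].
  - now apply Rlt_le, exp_increasing.
  - apply Rle_refl.
Qed.

Lemma ln_le_sub_1 y : 0 < y -> ln y <= y - 1.
Proof. intros Hy; pose proof (exp_ineq1_le (ln y)); rewrite exp_ln in *; lra. Qed.

Lemma exp_opp_le_inv w : 0 <= w -> exp (- w) <= / (1 + w).
Proof.
  intros Hw; pose proof (exp_ineq1_le w).
  rewrite exp_Ropp; apply Rinv_le_contravar; lra.
Qed.

Lemma exp_convex l u v : 0 <= l <= 1 ->
  exp (l * u + (1 - l) * v) <= l * exp u + (1 - l) * exp v.
Proof.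
  intros Hl; set (m := l * u + (1 - l) * v).
  (* tangent line of [exp] at [m] *)
  assert (Hu : exp m * (1 + (u - m)) <= exp u).
  { replace (exp u) with (exp m * exp (u - m)) by (rewrite <- exp_plus; f_equal; ring).
    apply Rmult_le_compat_l; [apply Rlt_le, exp_pos | apply exp_ineq1_le]. }
  assert (Hv : exp m * (1 + (v - m)) <= exp v).
  { replace (exp v) with (exp m * exp (v - m)) by (rewrite <- exp_plus; f_equal; ring).
    apply Rmult_le_compat_l; [apply Rlt_le, exp_pos | apply exp_ineq1_le]. }
  assert (Hm : l * (exp m * (1 + (u - m))) + (1 - l) * (exp m * (1 + (v - m))) = exp m)
    by (unfold m; ring).
  nra.
Qed.

Lemma real_Lim_seq_bounds (u : nat -> R) l M :
  (forall n, l <= u n <= M) -> l <= real (Lim_seq u) <= M.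
Proof.
  intros H.
  assert (Hl : Rbar_le (Lim_seq (fun _ => l)) (Lim_seq u))
    by (apply Lim_seq_le_loc; exists O; intros; apply H).
  assert (HM : Rbar_le (Lim_seq u) (Lim_seq (fun _ => M)))
    by (apply Lim_seq_le_loc; exists O; intros; apply H).
  rewrite Lim_seq_const in Hl, HM.
  destruct (Lim_seq u); simpl in *; try contradiction; lra.
Qed.

(* [0 < c] handles [Lim_seq u = m_infty], for which [real] returns [0]. *)
Lemma real_Lim_seq_lt (u : nat -> R) d c :
  (forall n, u n <= d) -> d < c -> 0 < c -> real (Lim_seq u) < c.
Proof.
  intros H Hdc Hc.
  assert (Hd : Rbar_le (Lim_seq u) (Lim_seq (fun _ => d)))
    by (apply Lim_seq_le_loc; exists O; intros; apply H).
  rewrite Lim_seq_const in Hd.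
  destruct (Lim_seq u); simpl in *; try contradiction; lra.
Qed.

Lemma is_lim_seq_le_inv_INR (u : nat -> R) C :
  (forall n, 0 <= u n <= C / (INR n + 1)) -> is_lim_seq u 0.
Proof.
  intros H; apply is_lim_seq_le_le with (fun _ => 0) (fun n => C / (INR n + 1)).
  - exact H.
  - apply is_lim_seq_const.
  - replace (Finite 0) with (Rbar_mult C 0) by (simpl; f_equal; ring).
    apply (is_lim_seq_scal_l (fun n => / (INR n + 1)) C 0).
    replace (Finite 0) with (Rbar_inv p_infty) by reflexivity.
    apply is_lim_seq_inv; [|discriminate].
    apply (is_lim_seq_plus INR (fun _ => 1) p_infty 1 p_infty).
    + apply is_lim_seq_INR.
    + apply is_lim_seq_const.
    + reflexivity.
Qed.

Lemma Derive_eq_real_Lim_seq f x : Derive f x =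
  real (Lim_seq (fun n => (f (x + / (INR n + 1)) - f x) / / (INR n + 1))).
Proof.
  unfold Derive, Lim; f_equal; apply Lim_seq_ext; intros n; simpl.
  now rewrite Rplus_0_l.
Qed.

Lemma inv_INR_succ_bounds n : 0 < / (INR n + 1) <= 1.
Proof.
  pose proof (pos_INR n); split; [apply Rinv_0_lt_compat; lra|].
  rewrite <- Rinv_1; apply Rinv_le_contravar; lra.
Qed.

Lemma Derive_bounds f x l M :
  (forall h, 0 < h <= 1 -> l * h <= f (x + h) - f x <= M * h) -> l <= Derive f x <= M.
Proof.
  intros H; rewrite Derive_eq_real_Lim_seq; apply real_Lim_seq_bounds; intros n.
  pose proof (inv_INR_succ_bounds n) as Hh; destruct (H _ Hh).
  split; [apply Rle_div_r | apply Rle_div_l]; lra.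
Qed.

Lemma Derive_lt f x d c :
  (forall h, 0 < h <= 1 -> f (x + h) - f x <= d * h) -> d < c -> 0 < c -> Derive f x < c.
Proof.
  intros H Hdc Hc; rewrite Derive_eq_real_Lim_seq.
  apply (real_Lim_seq_lt _ d); auto; intros n.
  pose proof (inv_INR_succ_bounds n) as Hh; specialize (H _ Hh).
  apply Rle_div_l; lra.
Qed.

Definition Gamma_integrand (s x : R) : R := Rpower x (s - 1) * exp (- x).

Lemma Gamma_integrand_exp s x : 0 < x -> Gamma_integrand s x = exp ((s - 1) * ln x - x).
Proof. intros; unfold Gamma_integrand, Rpower; rewrite <- exp_plus; f_equal; ring. Qed.

Lemma Gamma_integrand_pos s x : 0 < Gamma_integrand s x.
Proof. apply Rmult_lt_0_compat; apply exp_pos. Qed.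

Lemma continuous_Gamma_integrand s x : 0 < x -> continuous (Gamma_integrand s) x.
Proof.
  intros Hx; apply (ex_derive_continuous (K := R_AbsRing) (V := R_NormedModule)).
  unfold Gamma_integrand, Rpower; auto_derive; lra.
Qed.

Lemma ex_RInt_Gamma_integrand s a b : 0 < a -> 0 < b -> ex_RInt (Gamma_integrand s) a b.
Proof.
  intros Ha Hb; apply (ex_RInt_continuous (V := R_CompleteNormedModule)).
  intros z Hz; apply continuous_Gamma_integrand.
  assert (0 < Rmin a b) by (apply Rmin_glb_lt; auto); lra.
Qed.

Lemma RInt_Gamma_integrand_le_subinterval s a b c d : 0 < a -> a <= c -> c <= d -> d <= b ->
  RInt (Gamma_integrand s) c d <= RInt (Gamma_integrand s) a b.
Proof.
  intros Ha Hac Hcd Hdb.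
  assert (Hnonneg : forall u v, 0 < u <= v -> 0 <= RInt (Gamma_integrand s) u v).
  { intros u v Huv; apply RInt_ge_0; [lra | apply ex_RInt_Gamma_integrand; lra |].
    intros; apply Rlt_le, Gamma_integrand_pos. }
  rewrite <- (RInt_Chasles _ a c b), <- (RInt_Chasles _ c d b)
    by (apply ex_RInt_Gamma_integrand; lra).
  pose proof (Hnonneg a c); pose proof (Hnonneg d b).
  change plus with Rplus; lra.
Qed.

Definition Gamma_tail_const (s : R) : R :=
  let p := Rabs (s - 1) + 1 in exp (p * ln (2 * p) - p).

(* [ln x <= x / (2 p) - 1 + ln (2 p)] absorbs the power [x ^ (s - 1)] into half of [exp (- x)]. *)
Lemma Gamma_integrand_le_tail s x : 1 <= x ->
  Gamma_integrand s x <= Gamma_tail_const s * exp (- x / 2).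
Proof.
  intros Hx; rewrite Gamma_integrand_exp by lra.
  unfold Gamma_tail_const; rewrite <- exp_plus; apply exp_le_exp_compat.
  set (p := Rabs (s - 1) + 1).
  assert (Hp : 1 <= p) by (unfold p; pose proof (Rabs_pos (s - 1)); lra).
  assert (Hsp : s - 1 <= p) by (unfold p; pose proof (Rle_abs (s - 1)); lra).
  assert (Hl : 0 <= ln x) by (rewrite <- ln_1; apply ln_le; lra).
  assert (Hln : ln (x / (2 * p)) <= x / (2 * p) - 1)
    by (apply ln_le_sub_1, Rdiv_lt_0_compat; lra).
  rewrite ln_div in Hln by lra.
  assert (Hpx : p * (ln x - ln (2 * p)) <= p * (x / (2 * p) - 1))
    by (apply Rmult_le_compat_l; lra).
  replace (p * (x / (2 * p) - 1)) with (x / 2 - p) in Hpx by (field; lra).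
  nra.
Qed.

Lemma RInt_Rpower_le s a : 0 < s -> 0 < a <= 1 ->
  RInt (fun x => Rpower x (s - 1)) a 1 <= / s.
Proof.
  intros Hs Ha.
  set (F x := exp (s * ln x) / s).
  assert (H : is_RInt (fun x => Rpower x (s - 1)) a 1 (minus (F 1) (F a))).
  { apply (is_RInt_derive (V := R_CompleteNormedModule) F).
    - intros x Hx; rewrite Rmin_left, Rmax_right in Hx by lra.
      unfold F, Rpower; auto_derive; [lra|].
      replace ((s - 1) * ln x) with (s * ln x + - ln x) by ring.
      rewrite exp_plus, exp_Ropp, exp_ln by lra; field; lra.
    - intros x Hx; rewrite Rmin_left, Rmax_right in Hx by lra.
      apply (ex_derive_continuous (K := R_AbsRing) (V := R_NormedModule)).
      unfold Rpower; auto_derive; lra. }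
  rewrite (is_RInt_unique (V := R_CompleteNormedModule) _ _ _ _ H).
  unfold minus, plus, opp, F; simpl; rewrite ln_1, Rmult_0_r, exp_0.
  assert (0 < exp (s * ln a) / s) by (apply Rdiv_lt_0_compat; [apply exp_pos | lra]).
  unfold Rdiv in *; lra.
Qed.

Lemma RInt_exp_half_le K b : 0 <= K -> 1 <= b ->
  RInt (fun x => K * exp (- x / 2)) 1 b <= 2 * K.
Proof.
  intros HK Hb.
  set (F x := -2 * K * exp (- x / 2)).
  assert (H : is_RInt (fun x => K * exp (- x / 2)) 1 b (minus (F b) (F 1))).
  { apply (is_RInt_derive (V := R_CompleteNormedModule) F).
    - intros x _; unfold F; auto_derive; [auto | simpl; lra].
    - intros x _; apply (ex_derive_continuous (K := R_AbsRing) (V := R_NormedModule)).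
      auto_derive; auto. }
  rewrite (is_RInt_unique (V := R_CompleteNormedModule) _ _ _ _ H).
  unfold minus, plus, opp, F; simpl.
  pose proof (exp_pos (- b / 2)).
  assert (exp (- (1) / 2) <= exp 0) by (apply exp_le_exp_compat; lra).
  rewrite exp_0 in *.
  nra.
Qed.

Lemma RInt_Gamma_integrand_bounded s a b : 0 < s -> 0 < a <= b ->
  RInt (Gamma_integrand s) a b <= / s + 2 * Gamma_tail_const s.
Proof.
  intros Hs [Ha Hab].
  set (a' := Rmin a 1); set (b' := Rmax b 1).
  assert (Ha' : 0 < a' <= 1) by (unfold a'; split; [apply Rmin_glb_lt; lra | apply Rmin_r]).
  assert (Hb' : 1 <= b') by apply Rmax_r.
  assert (HK : 0 <= Gamma_tail_const s) by apply Rlt_le, exp_pos.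
  apply Rle_trans with (RInt (Gamma_integrand s) a' b').
  { assert (a' <= a) by apply Rmin_l; assert (b <= b') by apply Rmax_l.
    apply RInt_Gamma_integrand_le_subinterval; lra. }
  rewrite <- (RInt_Chasles _ a' 1 b') by (apply ex_RInt_Gamma_integrand; lra).
  change plus with Rplus; apply Rplus_le_compat.
  - apply Rle_trans with (RInt (fun x => Rpower x (s - 1)) a' 1); [|now apply RInt_Rpower_le].
    apply RInt_le; [lra | apply ex_RInt_Gamma_integrand; lra | |].
    + apply (ex_RInt_continuous (V := R_CompleteNormedModule)); intros z Hz.
      rewrite Rmin_left, Rmax_right in Hz by lra.
      apply (ex_derive_continuous (K := R_AbsRing) (V := R_NormedModule)).
      unfold Rpower; auto_derive; lra.
    + intros x Hx; unfold Gamma_integrand.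
      assert (exp (- x) <= 1) by (rewrite <- exp_0; apply exp_le_exp_compat; lra).
      pose proof (exp_pos (- x)); pose proof (exp_pos ((s - 1) * ln x)).
      unfold Rpower; nra.
  - apply Rle_trans with (RInt (fun x => Gamma_tail_const s * exp (- x / 2)) 1 b');
      [|now apply RInt_exp_half_le].
    apply RInt_le; [lra | apply ex_RInt_Gamma_integrand; lra | |].
    + apply (ex_RInt_continuous (V := R_CompleteNormedModule)); intros z _.
      apply (ex_derive_continuous (K := R_AbsRing) (V := R_NormedModule)).
      auto_derive; auto.
    + intros x Hx; apply Gamma_integrand_le_tail; lra.
Qed.

Definition trunc_lo (n : nat) : R := exp (- (INR n + 1)).
Definition trunc_hi (n : nat) : R := INR n + 1.
Definition Gamma_trunc (s : R) (n : nat) : R :=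
  RInt (Gamma_integrand s) (trunc_lo n) (trunc_hi n).

Lemma trunc_lo_pos n : 0 < trunc_lo n.
Proof. apply exp_pos. Qed.

Lemma trunc_lo_lt_1 n : trunc_lo n < 1.
Proof.
  pose proof (pos_INR n); rewrite <- exp_0; apply exp_increasing; lra.
Qed.

Lemma trunc_hi_ge_1 n : 1 <= trunc_hi n.
Proof. pose proof (pos_INR n); unfold trunc_hi; lra. Qed.

Lemma trunc_lo_le_hi n : trunc_lo n <= trunc_hi n.
Proof. pose proof (trunc_lo_lt_1 n); pose proof (trunc_hi_ge_1 n); lra. Qed.

Lemma trunc_lo_S n : trunc_lo (S n) <= trunc_lo n.
Proof. apply exp_le_exp_compat; rewrite S_INR; lra. Qed.

Lemma trunc_hi_S n : trunc_hi n <= trunc_hi (S n).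
Proof. unfold trunc_hi; rewrite S_INR; lra. Qed.

Lemma trunc_eventually_contains a b : 0 < a ->
  exists n, trunc_lo n <= a /\ b <= trunc_hi n.
Proof.
  intros Ha; pose proof is_lim_seq_INR as HI; apply is_lim_seq_spec in HI.
  destruct (HI (Rmax b (- ln a))) as [N HN]; exists N.
  specialize (HN N (le_n N)).
  pose proof (Rmax_l b (- ln a)); pose proof (Rmax_r b (- ln a)).
  split; unfold trunc_lo, trunc_hi; [|lra].
  rewrite <- (exp_ln a) by exact Ha; apply exp_le_exp_compat; lra.
Qed.

Lemma Gamma_trunc_S s n : Gamma_trunc s n <= Gamma_trunc s (S n).
Proof.
  apply RInt_Gamma_integrand_le_subinterval;
    auto using trunc_lo_pos, trunc_lo_S, trunc_lo_le_hi, trunc_hi_S.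
Qed.

Lemma Gamma_trunc_pos s n : 0 < Gamma_trunc s n.
Proof.
  pose proof (trunc_lo_lt_1 n); pose proof (trunc_hi_ge_1 n).
  apply RInt_gt_0; [lra | intros; apply Gamma_integrand_pos |].
  intros x Hx; apply continuous_Gamma_integrand; pose proof (trunc_lo_pos n); lra.
Qed.

(* Every interval [a, b] of (0, oo) lies between two truncations, so a limit of the increasing
   truncations is also the limit along the filters of the improper integral. *)
Lemma is_lim_seq_Gamma_trunc s : 0 < s -> is_lim_seq (Gamma_trunc s) (Gamma s).
Proof.
  intros Hs.
  assert (Hex : ex_finite_lim_seq (Gamma_trunc s)).
  { apply ex_finite_lim_seq_incr with (/ s + 2 * Gamma_tail_const s); [apply Gamma_trunc_S|].
    intros n; apply RInt_Gamma_integrand_bounded; auto.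
    split; [apply trunc_lo_pos | apply trunc_lo_le_hi]. }
  set (L := real (Lim_seq (Gamma_trunc s))).
  assert (HL : is_lim_seq (Gamma_trunc s) L) by exact (Lim_seq_correct' _ Hex).
  assert (HleL : forall n, Gamma_trunc s n <= L)
    by (apply is_lim_seq_incr_compare; auto; apply Gamma_trunc_S).
  replace (Gamma s) with L; [exact HL|].
  symmetry; unfold Gamma; apply (is_RInt_gen_unique (V := R_CompleteNormedModule)).
  intros P [eps HP]; apply is_lim_seq_spec in HL.
  destruct (HL eps) as [N HN]; specialize (HN N (le_n N)).
  apply Filter_prod with (fun a => 0 < a <= trunc_lo N) (fun b => trunc_hi N < b).
  - exists (mkposreal _ (trunc_lo_pos N)); intros y Hy Hy0.
    unfold ball in Hy; simpl in Hy; unfold AbsRing_ball, abs, minus, plus, opp in Hy; simpl in Hy.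
    apply Rabs_def2 in Hy; lra.
  - now exists (trunc_hi N).
  - intros a b [Ha HaN] HbN; simpl.
    pose proof (trunc_lo_le_hi N).
    exists (RInt (Gamma_integrand s) a b); split.
    + apply (RInt_correct (V := R_CompleteNormedModule)), ex_RInt_Gamma_integrand; lra.
    + apply HP; unfold ball; simpl; unfold AbsRing_ball, abs, minus, plus, opp; simpl.
      assert (Hlo : Gamma_trunc s N <= RInt (Gamma_integrand s) a b)
        by (apply RInt_Gamma_integrand_le_subinterval; lra).
      destruct (trunc_eventually_contains a b Ha) as [n [Hn1 Hn2]].
      assert (Hhi : RInt (Gamma_integrand s) a b <= Gamma_trunc s n)
        by (apply RInt_Gamma_integrand_le_subinterval; pose proof (trunc_lo_pos n); lra).
      specialize (HleL n); apply Rabs_def2 in HN; apply Rabs_def1; lra.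
Qed.

Lemma Gamma_pos s : 0 < s -> 0 < Gamma s.
Proof.
  intros Hs.
  assert (Hle : Rbar_le (Gamma_trunc s 0) (Gamma s)).
  { apply (is_lim_seq_le (fun _ => Gamma_trunc s 0) (Gamma_trunc s));
      [| apply is_lim_seq_const | now apply is_lim_seq_Gamma_trunc].
    intros n; induction n; [lra|]; pose proof (Gamma_trunc_S s n); lra. }
  pose proof (Gamma_trunc_pos s 0); simpl in Hle; lra.
Qed.

Lemma RInt_Gamma_integrand_succ s a b : 0 < a -> a <= b ->
  RInt (Gamma_integrand (s + 1)) a b =
  s * RInt (Gamma_integrand s) a b + (Gamma_integrand (s + 1) a - Gamma_integrand (s + 1) b).
Proof.
  intros Ha Hab.
  set (F x := - exp (s * ln x - x)).
  assert (HF : is_RInt (fun x => Gamma_integrand (s + 1) x - s * Gamma_integrand s x) a b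
                 (minus (F b) (F a))).
  { apply (is_RInt_derive (V := R_CompleteNormedModule) F).
    - intros x Hx; rewrite Rmin_left, Rmax_right in Hx by lra.
      unfold F; auto_derive; [lra|].
      rewrite !Gamma_integrand_exp by lra.
      replace ((s + 1 - 1) * ln x - x) with (s * ln x - x) by ring.
      replace ((s - 1) * ln x - x) with ((s * ln x - x) + - ln x) by ring.
      replace (s * ln x + - x) with (s * ln x - x) by ring.
      rewrite (exp_plus (s * ln x - x)), exp_Ropp, exp_ln by lra; field; lra.
    - intros x Hx; rewrite Rmin_left, Rmax_right in Hx by lra.
      apply (continuous_minus (K := R_AbsRing) (V := R_NormedModule));
        [|apply (continuous_scal_r (K := R_AbsRing) (V := R_NormedModule) s)];
        apply continuous_Gamma_integrand; lra. }
  assert (Hs : is_RInt (fun x => s * Gamma_integrand s x) a b (s * RInt (Gamma_integrand s) a b)).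
  { apply (is_RInt_scal (V := R_CompleteNormedModule)).
    apply (RInt_correct (V := R_CompleteNormedModule)), ex_RInt_Gamma_integrand; lra. }
  pose proof (is_RInt_plus (V := R_CompleteNormedModule) _ _ _ _ _ _ HF Hs) as Hsum.
  apply (is_RInt_ext (V := R_CompleteNormedModule)) with (g := Gamma_integrand (s + 1)) in Hsum;
    [|intros x _; change plus with Rplus; lra].
  rewrite (is_RInt_unique (V := R_CompleteNormedModule) _ _ _ _ Hsum).
  unfold minus, plus, opp, F; simpl.
  rewrite !Gamma_integrand_exp by lra.
  replace (s + 1 - 1) with s by ring; ring.
Qed.

Lemma is_lim_seq_Gamma_integrand_trunc_lo s : 0 < s ->
  is_lim_seq (fun n => Gamma_integrand (s + 1) (trunc_lo n)) 0.
Proof.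
  intros Hs; apply is_lim_seq_le_inv_INR with (/ s); intros n.
  pose proof (Gamma_integrand_pos (s + 1) (trunc_lo n)); split; [lra|].
  rewrite Gamma_integrand_exp by apply trunc_lo_pos.
  unfold trunc_lo at 1; rewrite ln_exp.
  pose proof (pos_INR n); pose proof (trunc_lo_pos n).
  apply Rle_trans with (exp (- (s * (INR n + 1)))); [apply exp_le_exp_compat; nra|].
  apply Rle_trans with (/ (1 + s * (INR n + 1))); [apply exp_opp_le_inv; nra|].
  unfold Rdiv; rewrite <- Rinv_mult; apply Rinv_le_contravar; nra.
Qed.

Lemma is_lim_seq_Gamma_integrand_trunc_hi s :
  is_lim_seq (fun n => Gamma_integrand s (trunc_hi n)) 0.
Proof.
  apply is_lim_seq_le_inv_INR with (2 * Gamma_tail_const s); intros n.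
  pose proof (Gamma_integrand_pos s (trunc_hi n)); split; [lra|].
  pose proof (trunc_hi_ge_1 n).
  assert (HK : 0 < Gamma_tail_const s) by apply exp_pos.
  apply Rle_trans with (Gamma_tail_const s * exp (- (trunc_hi n / 2))).
  { replace (- (trunc_hi n / 2)) with (- trunc_hi n / 2) by (unfold Rdiv; ring).
    now apply Gamma_integrand_le_tail. }
  apply Rle_trans with (Gamma_tail_const s * / (1 + trunc_hi n / 2)).
  { apply Rmult_le_compat_l; [lra | apply exp_opp_le_inv; lra]. }
  unfold trunc_hi in *; replace (2 * Gamma_tail_const s / (INR n + 1))
    with (Gamma_tail_const s * / ((INR n + 1) / 2)) by (field; lra).
  apply Rmult_le_compat_l; [lra | apply Rinv_le_contravar; lra].
Qed.

Lemma Gamma_succ s : 0 < s -> Gamma (s + 1) = s * Gamma s.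
Proof.
  intros Hs.
  assert (Hlim : is_lim_seq (fun n => s * Gamma_trunc s n +
             (Gamma_integrand (s + 1) (trunc_lo n) - Gamma_integrand (s + 1) (trunc_hi n)))
                 (s * Gamma s + (0 - 0))).
  { apply is_lim_seq_plus'.
    - now apply (is_lim_seq_scal_l _ s (Gamma s)), is_lim_seq_Gamma_trunc.
    - apply is_lim_seq_minus';
        [now apply is_lim_seq_Gamma_integrand_trunc_lo | apply is_lim_seq_Gamma_integrand_trunc_hi]. }
  apply is_lim_seq_ext with (v := Gamma_trunc (s + 1)) in Hlim.
  2: { intros n; unfold Gamma_trunc.
       rewrite RInt_Gamma_integrand_succ; auto using trunc_lo_pos, trunc_lo_le_hi. }
  pose proof (is_lim_seq_unique _ _ (is_lim_seq_Gamma_trunc (s + 1) ltac:(lra))) as H1.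
  apply is_lim_seq_unique in Hlim; rewrite H1 in Hlim; injection Hlim; lra.
Qed.

Lemma Gamma_integrand_convex_comb x y z c1 c2 l u : 0 < u -> 0 <= l <= 1 ->
  y - 1 = l * (x - 1) + (1 - l) * (z - 1) ->
  Gamma_integrand y u <= exp (l * c1 + (1 - l) * c2) *
    (l * exp (- c1) * Gamma_integrand x u + (1 - l) * exp (- c2) * Gamma_integrand z u).
Proof.
  intros Hu Hl Hy; rewrite !Gamma_integrand_exp by lra.
  set (v := (x - 1) * ln u - u); set (w := (z - 1) * ln u - u).
  set (C := l * c1 + (1 - l) * c2).
  replace ((y - 1) * ln u - u) with (l * (v + (C + - c1)) + (1 - l) * (w + (C + - c2)))
    by (unfold v, w, C; rewrite Hy; ring).
  eapply Rle_trans; [now apply exp_convex|].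
  right; rewrite !exp_plus; ring.
Qed.

Lemma Gamma_trunc_convex_comb x y z c1 c2 l n : 0 <= l <= 1 ->
  y - 1 = l * (x - 1) + (1 - l) * (z - 1) ->
  Gamma_trunc y n <= exp (l * c1 + (1 - l) * c2) *
    (l * exp (- c1) * Gamma_trunc x n + (1 - l) * exp (- c2) * Gamma_trunc z n).
Proof.
  intros Hl Hy; unfold Gamma_trunc.
  pose proof (trunc_lo_pos n); pose proof (trunc_lo_le_hi n).
  set (a := trunc_lo n) in *; set (b := trunc_hi n) in *.
  set (C := exp (l * c1 + (1 - l) * c2)).
  assert (HR : is_RInt
      (fun u => C * (l * exp (- c1) * Gamma_integrand x u + (1 - l) * exp (- c2) * Gamma_integrand z u))
      a b (C * (l * exp (- c1) * RInt (Gamma_integrand x) a b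
                + (1 - l) * exp (- c2) * RInt (Gamma_integrand z) a b))).
  { apply (is_RInt_scal (V := R_CompleteNormedModule)).
    apply (is_RInt_plus (V := R_CompleteNormedModule));
      apply (is_RInt_scal (V := R_CompleteNormedModule));
      apply (RInt_correct (V := R_CompleteNormedModule)), ex_RInt_Gamma_integrand; lra. }
  rewrite <- (is_RInt_unique (V := R_CompleteNormedModule) _ _ _ _ HR).
  apply RInt_le; [lra | apply ex_RInt_Gamma_integrand; lra | eexists; exact HR |].
  intros u Hu; apply Gamma_integrand_convex_comb; auto; lra.
Qed.

Lemma ln_Gamma_convex x z l : 0 < x -> 0 < z -> 0 <= l <= 1 ->
  ln (Gamma (l * x + (1 - l) * z)) <= l * ln (Gamma x) + (1 - l) * ln (Gamma z).
Proof.
  intros Hx Hz Hl; set (y := l * x + (1 - l) * z).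
  assert (Hy : 0 < y) by (unfold y; nra).
  pose proof (Gamma_pos x Hx); pose proof (Gamma_pos z Hz); pose proof (Gamma_pos y Hy).
  set (c1 := ln (Gamma x)); set (c2 := ln (Gamma z)).
  assert (Hlim : is_lim_seq
      (fun n => exp (l * c1 + (1 - l) * c2) *
                (l * exp (- c1) * Gamma_trunc x n + (1 - l) * exp (- c2) * Gamma_trunc z n))
      (exp (l * c1 + (1 - l) * c2) *
                (l * exp (- c1) * Gamma x + (1 - l) * exp (- c2) * Gamma z))).
  { apply (is_lim_seq_scal_l _ _ (Finite _)), is_lim_seq_plus';
      apply (is_lim_seq_scal_l _ _ (Finite _)); now apply is_lim_seq_Gamma_trunc. }
  pose proof (is_lim_seq_le _ _ _ _
    (fun n => Gamma_trunc_convex_comb x y z c1 c2 l n Hl ltac:(unfold y; ring))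
    (is_lim_seq_Gamma_trunc y Hy) Hlim) as Hle; simpl in Hle.
  unfold c1, c2 in Hle; rewrite !exp_Ropp, !exp_ln in Hle by auto.
  replace (l * / Gamma x * Gamma x + (1 - l) * / Gamma z * Gamma z) with 1 in Hle
    by (field; lra).
  fold c1 c2 in Hle; rewrite <- (ln_exp (l * c1 + (1 - l) * c2)); apply ln_le; lra.
Qed.

Lemma ln_Gamma_succ s : 0 < s -> ln (Gamma (s + 1)) = ln s + ln (Gamma s).
Proof. intros Hs; rewrite Gamma_succ by exact Hs; apply ln_mult; auto using Gamma_pos. Qed.

Lemma ln_Gamma_shift s N : 0 < s ->
  ln (Gamma (s + INR (S N))) = ln (Gamma s) + sum_f_R0 (fun k => ln (s + INR k)) N.
Proof.
  intros Hs; induction N as [|N IH].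
  - simpl; rewrite Rplus_0_r, ln_Gamma_succ by exact Hs; ring.
  - rewrite tech5, S_INR.
    replace (s + (INR (S N) + 1)) with ((s + INR (S N)) + 1) by ring.
    rewrite ln_Gamma_succ, IH by (pose proof (pos_INR (S N)); lra); ring.
Qed.

Lemma ln_Gamma_incr_upper x h : 0 < x -> 0 < h <= 1 ->
  ln (Gamma (x + h)) - ln (Gamma x) <= ln x * h.
Proof.
  intros Hx Hh.
  pose proof (ln_Gamma_convex x (x + 1) (1 - h) Hx ltac:(lra) ltac:(lra)) as Hc.
  replace ((1 - h) * x + (1 - (1 - h)) * (x + 1)) with (x + h) in Hc by ring.
  rewrite ln_Gamma_succ in Hc by exact Hx; lra.
Qed.

(* Convexity on [X, X + 1, X + 1 + h] with [ln Gamma (X + 1) = ln X + ln Gamma X]. *)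
Lemma ln_Gamma_incr_lower X h : 0 < X -> 0 < h ->
  h * ln X <= ln (Gamma (X + 1 + h)) - ln (Gamma (X + 1)).
Proof.
  intros HX Hh; set (l := h / (1 + h)).
  assert (Hl : 0 <= l <= 1).
  { unfold l; split; [apply Rdiv_le_0_compat; lra | apply Rle_div_l; lra]. }
  pose proof (ln_Gamma_convex X (X + 1 + h) l HX ltac:(lra) Hl) as Hc.
  replace (l * X + (1 - l) * (X + 1 + h)) with (X + 1) in Hc by (unfold l; field; lra).
  rewrite ln_Gamma_succ in * by exact HX.
  assert (E : (1 + h) * (l * ln (Gamma X) + (1 - l) * ln (Gamma (X + 1 + h)))
              = h * ln (Gamma X) + ln (Gamma (X + 1 + h))) by (unfold l; field; lra).
  apply Rmult_le_compat_l with (r := 1 + h) in Hc; lra.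
Qed.

Lemma ln_add_sub_le y h : 0 < y -> 0 < h -> ln (y + h) - ln y <= h * / y.
Proof.
  intros Hy Hh; rewrite <- ln_div by lra.
  replace (h * / y) with ((y + h) / y - 1) by (field; lra).
  apply ln_le_sub_1, Rdiv_lt_0_compat; lra.
Qed.

Lemma ln_Gamma_incr_lower_sum x h N : 0 < x -> 0 < h ->
  (ln (x + INR N) - sum_f_R0 (fun k => / (x + INR k)) N) * h <= ln (Gamma (x + h)) - ln (Gamma x).
Proof.
  intros Hx Hh; pose proof (pos_INR N).
  pose proof (ln_Gamma_incr_lower (x + INR N) h ltac:(lra) Hh) as Hlow.
  replace (x + INR N + 1) with (x + INR (S N)) in Hlow by (rewrite S_INR; ring).
  replace (x + INR (S N) + h) with (x + h + INR (S N)) in Hlow by ring.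
  rewrite !ln_Gamma_shift in Hlow by lra.
  assert (Hsum : sum_f_R0 (fun k => ln (x + h + INR k)) N - sum_f_R0 (fun k => ln (x + INR k)) N
                 <= h * sum_f_R0 (fun k => / (x + INR k)) N).
  { rewrite <- minus_sum, scal_sum; apply sum_Rle; intros k _.
    pose proof (pos_INR k); rewrite Rmult_comm.
    replace (x + h + INR k) with (x + INR k + h) by ring.
    apply ln_add_sub_le; lra. }
  lra.
Qed.

Lemma digamma_ge x N : 0 < x ->
  ln (x + INR N) - sum_f_R0 (fun k => / (x + INR k)) N <= digamma x.
Proof.
  intros Hx; apply (Derive_bounds _ _ _ (ln x)); intros h Hh.
  split; [apply ln_Gamma_incr_lower_sum | apply ln_Gamma_incr_upper]; lra.
Qed.

Lemma sum_inv_shift_le_harmonic x N : 1 <= x ->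
  sum_f_R0 (fun k => / (x + INR k)) N <= sum_f_R0 (fun k => / INR (S k)) N - (1 - / x).
Proof.
  intros Hx; induction N as [|N IH].
  - simpl; rewrite Rplus_0_r, Rinv_1; lra.
  - rewrite !tech5; pose proof (pos_INR (S N)).
    assert (/ (x + INR (S N)) <= / INR (S (S N)))
      by (apply Rinv_le_contravar; rewrite (S_INR (S N)); lra).
    lra.
Qed.

Lemma harmonic_sub_ln_le_1 n : sum_f_R0 (fun k => / INR (S k)) n - ln (INR (S n)) <= 1.
Proof.
  induction n as [|n IH].
  - simpl; rewrite ln_1; lra.
  - rewrite tech5; pose proof (pos_INR n).
    assert (Hpos : 0 < INR (S n) / INR (S (S n))) by (apply Rdiv_lt_0_compat; rewrite ?S_INR; lra).
    pose proof (ln_le_sub_1 _ Hpos) as Hln.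
    rewrite ln_div in Hln by (rewrite ?S_INR; lra).
    replace (INR (S n) / INR (S (S n)) - 1) with (- / INR (S (S n))) in Hln
      by (rewrite !S_INR; field; lra).
    lra.
Qed.

Lemma euler_gamma_add_digamma_ge x : 1 <= x -> 1 - / x <= euler_gamma + digamma x.
Proof.
  intros Hx; unfold euler_gamma.
  assert (H : forall n, 1 - / x - digamma x <=
                sum_f_R0 (fun k => / INR (S k)) n - ln (INR (S n)) <= 1).
  { intros n; split; [|apply harmonic_sub_ln_le_1].
    pose proof (digamma_ge x n ltac:(lra)); pose proof (sum_inv_shift_le_harmonic x n Hx).
    assert (ln (INR (S n)) <= ln (x + INR n))
      by (pose proof (pos_INR n); apply ln_le; rewrite S_INR; lra).
    lra. }
  pose proof (real_Lim_seq_bounds _ _ _ H); lra.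
Qed.

Section QGamma.

Variable q : R.
Hypothesis Hq : 0 < q < 1.

Lemma ln_q_lt_0 : ln q < 0.
Proof. rewrite <- ln_1; apply ln_increasing; lra. Qed.

Lemma Rpower_q_lt_1 a : 0 < a -> Rpower q a < 1.
Proof.
  intros Ha; unfold Rpower; rewrite <- exp_0; apply exp_increasing.
  pose proof ln_q_lt_0; nra.
Qed.

Lemma Rpower_q_antimono a b : a <= b -> Rpower q b <= Rpower q a.
Proof. intros Hab; apply exp_le_exp_compat; pose proof ln_q_lt_0; nra. Qed.

Lemma q_pow_bounds n : (1 <= n)%nat -> 0 < q ^ n < 1.
Proof.
  intros Hn; split; [apply pow_lt; lra|].
  apply pow_lt_1_compat; [lra | lia].
Qed.

Definition qfactor (s : R) (n : nat) : R := (1 - q ^ n) / (1 - Rpower q (s + INR n)).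

Lemma qGamma_partial_S s N : qGamma_partial q s (S N) = qGamma_partial q s N * qfactor s (S N).
Proof. reflexivity. Qed.

Lemma qfactor_bounds s n : 0 < s -> (1 <= n)%nat -> 1 - q ^ n <= qfactor s n <= 1.
Proof.
  intros Hs Hn; unfold qfactor.
  pose proof (pos_INR n); pose proof (q_pow_bounds n Hn).
  pose proof (Rpower_q_lt_1 (s + INR n) ltac:(lra)).
  assert (HR : Rpower q (s + INR n) <= q ^ n)
    by (rewrite <- Rpower_pow by lra; apply Rpower_q_antimono; lra).
  assert (0 <= (1 - q ^ n) * Rpower q (s + INR n)) by (apply Rmult_le_pos; [lra | apply Rlt_le, exp_pos]).
  split; [apply Rle_div_r | apply Rle_div_l]; lra.
Qed.

(* [(1 - y) (1 + y / (1 - q)) = 1 + y (q - y) / (1 - q) >= 1]. *)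
Lemma exp_le_1_sub y : 0 <= y <= q -> exp (- (y / (1 - q))) <= 1 - y.
Proof.
  intros Hy; assert (Hyq : 0 <= y / (1 - q)) by (apply Rdiv_le_0_compat; lra).
  eapply Rle_trans; [now apply exp_opp_le_inv|].
  rewrite <- Rdiv_1_l; apply Rle_div_l; [lra|].
  replace ((1 - y) * (1 + y / (1 - q))) with (1 + y * (q - y) / (1 - q)) by (field; lra).
  assert (0 <= y * (q - y) / (1 - q)) by (apply Rdiv_le_0_compat; nra).
  lra.
Qed.

Definition qprod_lower_bound : R := exp (- (q / ((1 - q) * (1 - q)))).

(* Product of the bounds [exp (- q ^ n / (1 - q)) <= 1 - q ^ n <= qfactor s n]. *)
Lemma qGamma_partial_ge s N : 0 < s -> qprod_lower_bound <= qGamma_partial q s N.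
Proof.
  intros Hs; apply Rle_trans with (exp (- ((q - q ^ S N) / ((1 - q) * (1 - q))))).
  { apply exp_le_exp_compat, Ropp_le_contravar, Rmult_le_compat_r;
      [apply Rlt_le, Rinv_0_lt_compat; nra | pose proof (q_pow_bounds (S N) ltac:(lia)); lra]. }
  induction N as [|N IH].
  - simpl; replace (q - q * 1) with 0 by ring.
    unfold Rdiv; rewrite Rmult_0_l, Ropp_0, exp_0; lra.
  - rewrite qGamma_partial_S.
    destruct (qfactor_bounds s (S N) Hs ltac:(lia)) as [F1 F2].
    pose proof (q_pow_bounds (S N) ltac:(lia)).
    assert (Hexp : exp (- (q ^ S N / (1 - q))) <= 1 - q ^ S N).
    { apply exp_le_1_sub; split; [lra|]; simpl.
      assert (q ^ N <= 1) by (rewrite <- (pow1 N); apply pow_incr; lra); nra. }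
    replace (- ((q - q ^ S (S N)) / ((1 - q) * (1 - q))))
      with (- ((q - q ^ S N) / ((1 - q) * (1 - q))) + - (q ^ S N / (1 - q))) by (simpl; field; lra).
    rewrite exp_plus; apply Rmult_le_compat; try (apply Rlt_le, exp_pos); lra.
Qed.

Lemma qGamma_partial_S_le s N : 0 < s -> qGamma_partial q s (S N) <= qGamma_partial q s N.
Proof.
  intros Hs; rewrite qGamma_partial_S.
  destruct (qfactor_bounds s (S N) Hs ltac:(lia)).
  pose proof (qGamma_partial_ge s N Hs); pose proof (exp_pos (- (q / ((1 - q) * (1 - q))))).
  unfold qprod_lower_bound in *; nra.
Qed.

Definition qprod (s : R) : R := real (Lim_seq (qGamma_partial q s)).

Lemma is_lim_seq_qprod s : 0 < s -> is_lim_seq (qGamma_partial q s) (qprod s).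
Proof.
  intros Hs; apply Lim_seq_correct'.
  apply ex_finite_lim_seq_decr with qprod_lower_bound;
    intros; [apply qGamma_partial_S_le | apply qGamma_partial_ge]; exact Hs.
Qed.

Lemma qprod_pos s : 0 < s -> 0 < qprod s.
Proof.
  intros Hs.
  assert (H : Rbar_le qprod_lower_bound (qprod s)).
  { apply (is_lim_seq_le (fun _ => qprod_lower_bound) (qGamma_partial q s));
      [intros; now apply qGamma_partial_ge | apply is_lim_seq_const | now apply is_lim_seq_qprod]. }
  pose proof (exp_pos (- (q / ((1 - q) * (1 - q))))); unfold qprod_lower_bound in *; simpl in H; lra.
Qed.

Lemma ln_qGamma s : 0 < s -> ln (qGamma q s) = (1 - s) * ln (1 - q) + ln (qprod s).
Proof.
  intros Hs; unfold qGamma; fold (qprod s).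
  rewrite ln_mult, ln_Rpower; [reflexivity | apply exp_pos | now apply qprod_pos].
Qed.

Lemma qfactor_antimono x h n : 0 < x -> 0 < h -> (1 <= n)%nat -> qfactor (x + h) n <= qfactor x n.
Proof.
  intros Hx Hh Hn; unfold qfactor; pose proof (pos_INR n); pose proof (q_pow_bounds n Hn).
  pose proof (Rpower_q_lt_1 (x + INR n) ltac:(lra)).
  pose proof (Rpower_q_antimono (x + INR n) (x + h + INR n) ltac:(lra)).
  apply Rmult_le_compat_l; [lra|]; apply Rinv_le_contravar; lra.
Qed.

(* Only the first factor is compared sharply; it yields the strict inequality. *)
Definition qratio (x h : R) : R := (1 - Rpower q (x + 1)) / (1 - Rpower q (x + h + 1)).

Lemma qratio_pos x h : 0 < x -> 0 < h -> 0 < qratio x h.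
Proof.
  intros Hx Hh; pose proof (Rpower_q_lt_1 (x + 1) ltac:(lra)).
  pose proof (Rpower_q_lt_1 (x + h + 1) ltac:(lra)); apply Rdiv_lt_0_compat; lra.
Qed.

Lemma qGamma_partial_shift_le x h N : 0 < x -> 0 < h ->
  qGamma_partial q (x + h) (S N) <= qratio x h * qGamma_partial q x (S N).
Proof.
  intros Hx Hh; pose proof (qratio_pos x h Hx Hh).
  induction N as [|N IH].
  - rewrite !qGamma_partial_S; simpl qGamma_partial; unfold qfactor, qratio.
    change (INR 1) with 1; pose proof (Rpower_q_lt_1 (x + 1) ltac:(lra));
      pose proof (Rpower_q_lt_1 (x + h + 1) ltac:(lra)).
    right; field; lra.
  - rewrite (qGamma_partial_S (x + h) (S N)), (qGamma_partial_S x (S N)).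
    destruct (qfactor_bounds (x + h) (S (S N)) ltac:(lra) ltac:(lia)).
    pose proof (qfactor_antimono x h (S (S N)) Hx Hh ltac:(lia)).
    pose proof (q_pow_bounds (S (S N)) ltac:(lia)).
    pose proof (qGamma_partial_ge x (S N) Hx); pose proof (exp_pos (- (q / ((1 - q) * (1 - q))))).
    unfold qprod_lower_bound in *.
    apply Rle_trans with (qratio x h * qGamma_partial q x (S N) * qfactor (x + h) (S (S N)));
      [apply Rmult_le_compat_r; lra|].
    rewrite Rmult_assoc; apply Rmult_le_compat_l; [lra|]; apply Rmult_le_compat_l; lra.
Qed.

Lemma qprod_shift_le x h : 0 < x -> 0 < h -> qprod (x + h) <= qratio x h * qprod x.
Proof.
  intros Hx Hh.
  assert (H : Rbar_le (Lim_seq (qGamma_partial q (x + h)))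
                      (Lim_seq (fun n => qratio x h * qGamma_partial q x n))).
  { apply Lim_seq_le_loc; exists 1%nat; intros [|n] Hn; [lia|].
    now apply qGamma_partial_shift_le. }
  rewrite (is_lim_seq_unique _ _ (is_lim_seq_qprod (x + h) ltac:(lra))),
    (is_lim_seq_unique _ _ (is_lim_seq_scal_l _ (qratio x h) _ (is_lim_seq_qprod x Hx))) in H.
  exact H.
Qed.

(* With [L = - ln q]: [1 - q ^ h >= 1 - 1 / (1 + L h) >= L h / (1 + L)] for [h <= 1]. *)
Lemma ln_qratio_le x h : 0 < x -> 0 < h <= 1 ->
  ln (qratio x h) <= - (Rpower q (x + 1) * (- ln q / (1 - ln q))) * h.
Proof.
  intros Hx Hh.
  pose proof (Rpower_q_lt_1 (x + 1) ltac:(lra)); pose proof (Rpower_q_lt_1 (x + h + 1) ltac:(lra)).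
  eapply Rle_trans; [apply ln_le_sub_1, qratio_pos; lra|].
  set (L := - ln q); assert (HL : 0 < L) by (unfold L; pose proof ln_q_lt_0; lra).
  assert (Hqh : L * h / (1 + L) <= 1 - Rpower q h).
  { unfold Rpower; replace (h * ln q) with (- (L * h)) by (unfold L; ring).
    pose proof (exp_opp_le_inv (L * h) ltac:(nra)).
    assert (/ (1 + L * h) <= 1 - L * h / (1 + L)).
    { rewrite <- Rdiv_1_l; apply Rle_div_l; [nra|].
      replace ((1 - L * h / (1 + L)) * (1 + L * h)) with (1 + L * L * (h * (1 - h)) / (1 + L))
        by (field; lra).
      assert (0 <= L * L * (h * (1 - h)) / (1 + L)) by (apply Rdiv_le_0_compat; nra).
      lra. }
    lra. }
  unfold qratio; replace (Rpower q (x + h + 1)) with (Rpower q (x + 1) * Rpower q h)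
    by (rewrite <- Rpower_plus; f_equal; ring).
  set (A := Rpower q (x + 1)) in *; set (B := Rpower q h) in *.
  assert (HA : 0 < A) by apply exp_pos; assert (HB : 0 < B) by apply exp_pos.
  assert (HLh : 0 <= L * h / (1 + L)) by (apply Rdiv_le_0_compat; nra).
  assert (HAB : 0 < 1 - A * B) by nra.
  replace ((1 - A) / (1 - A * B) - 1) with (- (A * (1 - B)) / (1 - A * B)) by (field; lra).
  replace (1 - ln q) with (1 + L) by (unfold L; ring).
  replace (- (A * (L / (1 + L))) * h) with (- (A * (L * h / (1 + L)))) by (field; lra).
  apply Rle_trans with (- (A * (1 - B))); [|nra].
  apply Rle_div_l; [lra|]; nra.
Qed.

End QGamma.

Lemma qdigamma_lt q x : 0 < q < 1 -> 0 < x -> qdigamma q x < - ln (1 - q).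
Proof.
  intros Hq Hx.
  assert (Hc : 0 < - ln (1 - q)).
  { assert (ln (1 - q) < ln 1) by (apply ln_increasing; lra); rewrite ln_1 in *; lra. }
  set (d := Rpower q (x + 1) * (- ln q / (1 - ln q))).
  assert (Hd : 0 < d).
  { pose proof (ln_q_lt_0 q Hq); apply Rmult_lt_0_compat; [apply exp_pos | apply Rdiv_lt_0_compat; lra]. }
  apply (Derive_lt _ _ (- ln (1 - q) - d)); [intros h Hh | lra | exact Hc].
  rewrite !ln_qGamma by (auto; lra).
  pose proof (qprod_pos q Hq x Hx); pose proof (qprod_pos q Hq (x + h) ltac:(lra)).
  pose proof (qratio_pos q Hq x h Hx ltac:(lra)).
  assert (Hln : ln (qprod q (x + h)) <= ln (qratio q x h) + ln (qprod q x)).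
  { rewrite <- ln_mult by auto; apply ln_le; auto; now apply qprod_shift_le. }
  pose proof (ln_qratio_le q Hq x h Hx Hh) as Hratio; fold d in Hratio; nra.
Qed.

Theorem lemma3p4 (a b q alpha beta t : R) :
  0 < a -> 0 < b -> 0 < q < 1 -> alpha + beta * t > 1 ->
  a * euler_gamma - b * ln (1 - q) + a * digamma (alpha + beta * t)
    - b * qdigamma q (alpha + beta * t) > 0.
Proof.
  intros Ha Hb Hq Hx; set (x := alpha + beta * t) in *.
  pose proof (euler_gamma_add_digamma_ge x ltac:(lra)) as HGamma.
  pose proof (qdigamma_lt q x Hq ltac:(lra)) as HqGamma.
  assert (Hinv : / x < 1) by (rewrite <- Rinv_1; apply Rinv_lt_contravar; lra).
  assert (0 < a * (euler_gamma + digamma x)) by (apply Rmult_lt_0_compat; lra).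
  assert (0 < b * (- ln (1 - q) - qdigamma q x)) by (apply Rmult_lt_0_compat; lra).
  lra.
Qed.
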